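(* Let $\mathcal{A}\subset\mathbb{Z}$ be a finite alphabet, let $G=(V,E)$ be a finite directed graph with edge labelling $\ell:E\to\mathcal{A}$, assume the matrix $M=\sum_{a\in\mathcal{A}}M_a$ is primitive, let $\beta>1$ be a Pisot number and let $\nu=(\phi^+)_*(\mu^+)$ as described in the context. Then the set $P=\{x\in\mathbb{R}\mid \nu(\{x\})>0\}$ of atoms of $\nu$ is a finite subset of $\mathbb{Q}(\beta)$.
   Context: For $a\in\mathcal{A}$, $M_a$ is the $V\times V$ matrix with $(M_a)_{ij}=1$ if $(i,j)\in E$ and $\ell((i,j))=a$, and $0$ otherwise. By Perron–Frobenius, $M$ has a dominant eigenvalue $\lambda>0$ with positive left eigenvector $\mathbf v_L$ and right eigenvector $\mathbf v_R$, normalised by $\mathbf v_L^{\mathsf T}\mathbf v_R=1$. $\mathcal{K}^+\subseteq\mathcal{A}^{\mathbb{N}}$ is the set of sequences $(\ell(e_k))_{k\ge1}$ for infinite paths $e_1e_2\ldots$ in $G$ (terminal vertex of $e_j$ equals initial vertex of $e_{j+1}$). $\mu^+$ is the Borel probability measure on $\mathcal{K}^+$ with $\mu^+([\varepsilon_1,\ldots,\varepsilon_k])=\lambda^{-k}\mathbf v_L^{\mathsf T}M_{\varepsilon_1}\cdots M_{\varepsilon_k}\mathbf v_R$ on cylinder sets $[\varepsilon_1,\ldots,\varepsilon_k]=\{x\in\mathcal{K}^+: x_1=\varepsilon_1,\ldots,x_k=\varepsilon_k\}$. A Pisot number is an algebraic integer $>1$ all of whose other Galois conjugates have modulus $<1$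 (integers $\ge2$ included). $\phi^+:\mathcal{K}^+\to\mathbb{R}$, $(x_k)\mapsto\sum_{k\ge1}x_k\beta^{-k}$, and $\nu(A)=\mu^+((\phi^+)^{-1}(A))$. *)

From HB Require Import structures.
From mathcomp Require Import all_boot all_order all_algebra.
From mathcomp Require Import all_classical all_reals all_analysis.
From mathcomp Require Import complex.

Set Implicit Arguments.
Unset Strict Implicit.
Unset Printing Implicit Defensive.

Import Order.TTheory GRing.Theory Num.Theory.
Local Open Scope ring_scope.
Local Open Scope classical_set_scope.

(* A sequence x : nat -> int encodes (x_1, x_2, ...) via x k = x_(k+1).     *)
Definition seqZ := nat -> int.
HB.instance Definition _ := Choice.copy seqZ (nat -> int).
HB.instance Definition _ := isPointed.Build seqZ (fun _ => 0).

Definition cylinder (s : seq int) : set seqZ :=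
  [set x | forall i, (i < size s)%N -> x i = nth 0 s i].

Definition cylinders : set (set seqZ) := [set C | exists s, C = cylinder s].

(* The Borel sigma-algebra of the product topology on Z^N, i.e. the one
   generated by cylinder sets. *)
Notation seqSpace := (g_sigma_algebraType cylinders).

Definition Mlab (R : pzRingType) (n : nat) (E : {set 'I_n * 'I_n})
    (lab : 'I_n * 'I_n -> int) (a : int) : 'M[R]_n :=
  \matrix_(i, j) (((i, j) \in E) && (lab (i, j) == a))%:R.

Definition Mtot (R : pzRingType) (n : nat) (E : {set 'I_n * 'I_n})
    (lab : 'I_n * 'I_n -> int) (A : seq int) : 'M[R]_n :=
  \sum_(a <- A) Mlab R E lab a.

Definition Mword (R : pzRingType) (n : nat) (E : {set 'I_n * 'I_n})
    (lab : 'I_n * 'I_n -> int) (s : seq int) : 'M[R]_n :=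
  \prod_(a <- s) Mlab R E lab a.

Definition primitive (R : numDomainType) (n : nat) (M : 'M[R]_n) : Prop :=
  (forall i j, 0 <= M i j) /\ exists k : nat, (0 < k)%N /\ forall i j, 0 < (M ^+ k) i j.

Definition Kplus (n : nat) (E : {set 'I_n * 'I_n}) (lab : 'I_n * 'I_n -> int)
  : set seqZ :=
  [set x | exists v : nat -> 'I_n,
     forall k, (v k, v k.+1) \in E /\ x k = lab (v k, v k.+1)].

(* beta is an algebraic integer > 1 (its minimal polynomial over Q is a monic
   integer polynomial p) all of whose other Galois conjugates (the other
   complex roots of p) have modulus < 1. *)
Definition pisot (R : realType) (beta : R) : Prop :=
  1 < beta /\
  exists p : {poly int},
    [/\ p \is monic,
        irreducible_poly (map_poly intr p : {poly rat}),
        root (map_poly intr p) beta &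
        forall z : R[i], root (map_poly intr p) z -> z != (beta%:C)%C -> `|z| < 1].

Definition in_Qbeta (R : realType) (beta x : R) : Prop :=
  exists p q : {poly rat},
    (map_poly ratr q).[beta] != 0 /\
    x = (map_poly ratr p).[beta] / (map_poly ratr q).[beta].

Definition phiplus (R : realType) (beta : R) (x : seqZ) : R :=
  limn (fun N => \sum_(k < N) (x k)%:~R * beta ^- k.+1).

Definition atoms (R : realType) (beta : R) (mu : set seqSpace -> \bar R)
  : set R :=
  [set x : R | (0 < mu (phiplus beta @^-1` [set x]))%E].

From HB Require Import structures.
From mathcomp Require Import all_boot all_order all_algebra.
From mathcomp Require Import all_classical all_reals all_analysis.
From mathcomp Require Import complex measurable_realfun.
From mathcomp Require Import ring lra.
Import Order.TTheory GRing.Theory Num.Theory.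
Import numFieldNormedType.Exports.
Local Open Scope ring_scope.
Local Open Scope classical_set_scope.
Set Implicit Arguments.
Unset Strict Implicit.
Unset Printing Implicit Defensive.

(* Renormalising by the right Perron eigenvector turns M into a stochastic
   matrix P (its Doob transform), and the mass of the fibre of x is bounded by
   a positive combination of the numbers point_mass x i: the probability that
   the P-chain started at i, reading the labels of the edges it follows as
   digits, keeps the remainders beta^k x - (digits read so far) in the window
   [-C, C], C = sum |a| / (beta - 1).  These numbers are P-harmonic in (x, i)
   and sum to at most 1 over distinct x, so they attain a maximum m > 0.  By the
   maximum principle the maximum propagates along edges, hence by primitivity
   to a point c_i at every vertex i, and a contraction argument shows that c_i
   is the only x with positive point_mass at i.  Along a cycle of length k
   through i the relations beta c_i - l(i, j) = c_j give
   (beta^k - 1) c_i in Z[beta], so c_i lies in Q(beta). *)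

Definition prefix_determined (p : nat) (Y : set seqZ) : Prop :=
  forall y y' : seqZ, (forall i, (i < p)%N -> y i = y' i) -> Y y -> Y y'.

Lemma cylinder_measurable (s : seq int) : measurable (cylinder s : set seqSpace).
Proof. by apply: sub_sigma_algebra; exists s. Qed.

Lemma cylinder_mkseq (y : seqZ) (p : nat) : cylinder (mkseq y p) y.
Proof. by move=> i; rewrite size_mkseq => ip; rewrite nth_mkseq. Qed.

Lemma prefix_determined_cylinders (p : nat) (Y : set seqZ) :
  prefix_determined p Y ->
  exists F : nat -> set seqZ, Y = \bigcup_k F k /\ forall k,
    F k = set0 \/ exists2 w, size w = p & F k = cylinder w /\ cylinder w `<=` Y.
Proof.
move=> detY.
pose good (w : seq int) := `[< size w = p /\ cylinder w `<=` Y >].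
pose F k := if unpickle k is Some w then if good w then cylinder w else set0
            else set0.
exists F; split; last first.
  move=> k; rewrite /F /good; case: (unpickle k) => [w|]; last by left.
  by case: asboolP => [[sw sub]|_]; [right; exists w | left].
apply/seteqP; split=> [y Yy|y [k _]]; last first.
  by rewrite /F /good; case: (unpickle k) => // w; case: asboolP => // -[_]; apply.
exists (pickle (mkseq y p)) => //; rewrite /F pickleK ifT; first exact: cylinder_mkseq.
apply/asboolP; split; first by rewrite size_mkseq.
move=> z zw; apply: detY Yy => i ip.
by rewrite zw ?size_mkseq // nth_mkseq.
Qed.

Lemma prefix_determined_measurable (p : nat) (Y : set seqZ) :
  prefix_determined p Y -> measurable (Y : set seqSpace).
Proof.
move=> /prefix_determined_cylinders [F [-> F_cyl]].
apply: bigcupT_measurable => k.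
by case: (F_cyl k) => [->|[w _ [-> _]]]; [exact: measurable0 | exact: cylinder_measurable].
Qed.

Lemma prefix_determined_null (R : realType) (mu : {measure set seqSpace -> \bar R})
    (p : nat) (Y : set seqZ) :
  prefix_determined p Y ->
  (forall w, size w = p -> cylinder w `<=` Y -> mu (cylinder w) = 0%E) ->
  mu Y = 0%E.
Proof.
move=> detY null_cyl; apply/(negligibleP _ (prefix_determined_measurable detY)).
have [F [eqY F_cyl]] := prefix_determined_cylinders detY.
rewrite eqY; apply: negligible_bigcup => k.
case: (F_cyl k) => [->|[w sw [-> sub]]]; first exact: negligible_set0.
by apply/(negligibleP _ (cylinder_measurable w)); exact: null_cyl.
Qed.

Lemma prefix_determined_measurable_fun (d : measure_display) (T : measurableType d)
    (p : nat) (f : seqZ -> T) (D : set seqSpace) :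
  (forall y y' : seqZ, (forall i, (i < p)%N -> y i = y' i) -> f y = f y') ->
  measurable_fun D (f : seqSpace -> T).
Proof.
move=> detf mD Y _; apply: measurableI => //.
by apply: (@prefix_determined_measurable p) => y y' /detf; rewrite /preimage /= => ->.
Qed.

Lemma measure_bigsetU_le (d : measure_display) (T : measurableType d) (R : realType)
    (mu : {measure set T -> \bar R}) (I : Type) (F : I -> set T) (s : seq I) :
  (forall i, measurable (F i)) ->
  (mu (\big[setU/set0]_(i <- s) F i) <= \sum_(i <- s) mu (F i))%E.
Proof.
move=> mF; elim: s => [|i s IH]; first by rewrite !big_nil measure0.
rewrite !big_cons; apply: le_trans (measureU2 _ (mF i) _) _.
  by apply: bigsetU_measurable => j _.
exact: leeD.
Qed.

Lemma cvgn_cauchyP (R : realType) (u : R^nat) :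
  cvgn u <-> forall m : nat, exists N, forall p, `|u N - u (N + p)%N| < m.+1%:R^-1.
Proof.
split=> [/cvgrPdistC_lt cu m | cu].
  have e2 : 0 < m.+1%:R^-1 / 2 :> R by rewrite divr_gt0 // invr_gt0 ltr0Sn.
  have [N _ HN] := cu _ e2.
  exists N => p; rewrite [ltRHS]splitr.
  have -> : u N - u (N + p)%N = (u N - limn u) - (u (N + p)%N - limn u) by ring.
  by apply: le_lt_trans (ler_normB _ _) _; apply: ltrD; apply: HN; rewrite /= ?leq_addr.
apply/cauchy_cvgP/cauchy_exP => e e0.
have [m _ me] := near_infty_natSinv_lt (PosNum e0).
have [N HN] := cu m; exists (u N); exists N => // k Nk.
rewrite -ball_normE /= -(subnKC Nk).
exact: lt_le_trans (HN _) (ltW (me m (leqnn m))).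
Qed.

Lemma measurable_cvgn (d : measure_display) (T : measurableType d) (R : realType)
    (f : (T -> R)^nat) :
  (forall N, measurable_fun setT (f N)) -> measurable [set t | cvgn (f ^~ t)].
Proof.
move=> mf.
have -> : [set t | cvgn (f ^~ t)] = \bigcap_m \bigcup_N \bigcap_p
    ((fun t => `|f N t - f (N + p)%N t|) @^-1` `]-oo, m.+1%:R^-1[).
  apply/seteqP; split=> t.
    move=> /cvgn_cauchyP cu m _; have [N HN] := cu m.
    by exists N => // p _ /=; rewrite in_itv /= HN.
  move=> ct; apply/cvgn_cauchyP => m; have [N _ HN] := ct m I.
  by exists N => p; have := HN p I; rewrite /= in_itv.
apply: bigcapT_measurable => m; apply: bigcupT_measurable => N.
apply: bigcapT_measurable => p; rewrite -[X in measurable X]setTI.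
by apply: measurableT_comp => //; exact: measurable_funB.
Qed.

Section Expansion.
Variables (R : realType) (beta : R).

Definition phiplus_sum (y : seqZ) (N : nat) : R :=
  \sum_(k < N) (y k)%:~R * beta ^- k.+1.

Lemma phiplusE (y : seqZ) : phiplus beta y = limn (phiplus_sum y).
Proof. by []. Qed.

Lemma measurable_phiplus : measurable_fun setT (phiplus beta : seqSpace -> R).
Proof.
have mS N : measurable_fun setT (phiplus_sum ^~ N : seqSpace -> R).
  apply: (@prefix_determined_measurable_fun _ _ N) => y y' yy'.
  by apply: eq_bigr => k _; rewrite yy'.
pose Cv := [set y : seqSpace | cvgn (phiplus_sum y)].
have mCv : measurable Cv := measurable_cvgn mS.
rewrite -(setUv Cv); apply/measurable_funU => //; first exact: measurableC.
split.
  apply: (measurable_fun_cvg (h := fun N (y : seqSpace) => phiplus_sum y N)) => //.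
  by move=> N; exact: measurable_funTS.
(* off [Cv], [phiplus] is the junk value [point] that [lim] returns for
   divergent sequences *)
apply: (@eq_measurable_fun _ _ _ _ _ (cst point)); last exact: measurable_cst.
by move=> y; rewrite inE => /dvgP; rewrite /= phiplusE => ->.
Qed.

Variable K : R.
Hypothesis beta_gt1 : 1 < beta.

Let beta_gt0 : 0 < beta. Proof. exact: lt_trans ltr01 beta_gt1. Qed.

Section BoundedDigits.
Variable y : seqZ.
Hypothesis digit_le : forall k, `|(y k)%:~R| <= K.

Let K_ge0 : 0 <= K. Proof. exact: le_trans (normr_ge0 _) (digit_le 0). Qed.

Let geometric_ratio_lt1 : `|beta^-1| < 1.
Proof. by rewrite ger0_norm ?invr_ge0 ?ltW // invf_lt1. Qed.

Lemma norm_phiplus_term_le k :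
  `|(y k)%:~R * beta ^- k.+1| <= geometric (K / beta) beta^-1 k.
Proof.
have bk_ge0 : 0 <= beta ^- k.+1 by rewrite invr_ge0 exprn_ge0 // ltW.
rewrite /geometric /= normrM [`|beta ^- _|]ger0_norm // -mulrA -exprVn -exprS exprVn.
exact: ler_wpM2r (digit_le k).
Qed.

Lemma is_cvg_phiplus_sum : cvgn (phiplus_sum y).
Proof.
have -> : phiplus_sum y = series (fun k => (y k)%:~R * beta ^- k.+1).
  by apply: funext => N; rewrite /series /= big_mkord.
apply: normed_cvg; apply: (series_le_cvg _ _ norm_phiplus_term_le).
- by move=> k; rewrite normr_ge0.
- by move=> k; rewrite geometric_ge0 ?divr_ge0 ?invr_ge0 // ltW.
- exact: is_cvg_geometric_series.
Qed.

Lemma norm_phiplus_sum_le N : `|phiplus_sum y N| <= K / (beta - 1).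
Proof.
rewrite /phiplus_sum; apply: (le_trans (ler_norm_sum _ _ _)).
apply: (@le_trans _ _ (\sum_(k < N) geometric (K / beta) beta^-1 k)).
  by apply: ler_sum => k _; exact: norm_phiplus_term_le.
rewrite -(big_mkord xpredT (geometric (K / beta) beta^-1)).
apply: le_trans (geometric_le_lim _ _ _ geometric_ratio_lt1) _.
- exact: divr_ge0 K_ge0 (ltW beta_gt0).
- by rewrite invr_gt0.
suff -> : K / beta * (1 - beta^-1)^-1 = K / (beta - 1) by [].
by field; rewrite subr_eq0 !gt_eqF.
Qed.

Lemma norm_phiplus_le : `|phiplus beta y| <= K / (beta - 1).
Proof.
have cS := is_cvg_phiplus_sum; rewrite phiplusE ler_norml.
have bound N : - (K / (beta - 1)) <= phiplus_sum y N <= K / (beta - 1).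
  by rewrite -ler_norml norm_phiplus_sum_le.
by apply/andP; split; [apply: limr_ge | apply: limr_le] => //; apply: nearW => N;
  case/andP: (bound N).
Qed.

End BoundedDigits.

Lemma phiplus_shift (y : seqZ) : (forall k, `|(y k)%:~R| <= K) ->
  phiplus beta y = ((y 0%N)%:~R + phiplus beta (fun k => y k.+1)) / beta.
Proof.
move=> digit_le; apply: (cvg_lim (@Rhausdorff R)); rewrite -cvg_shiftS.
have -> : [sequence phiplus_sum y n.+1]_n =
    (fun n => ((y 0%N)%:~R + phiplus_sum (fun k => y k.+1) n) * beta^-1).
  apply: funext => n /=; rewrite /phiplus_sum big_ord_recl /= expr1 mulrDl.
  congr (_ + _); rewrite mulr_suml; apply: eq_bigr => i _ /=.
  by rewrite /bump /= add1n -mulrA -invfM -exprSr.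
apply: cvgM; last exact: cvg_cst.
by apply: cvgD; [exact: cvg_cst | exact: is_cvg_phiplus_sum].
Qed.

End Expansion.

Definition digit_bound (R : realType) (A : seq int) : R := \sum_(a <- A) `|a|%:~R.

Lemma digit_bound_ge (R : realType) (A : seq int) (a : int) :
  a \in A -> `|a%:~R : R| <= digit_bound R A.
Proof.
rewrite -intr_norm /digit_bound => aA; rewrite (big_rem a aA) /= lerDl.
by apply: sumr_ge0 => b _; rewrite ler0z.
Qed.

Section AdmissibleWords.
Variables (R : realType) (beta C : R) (A : seq int).

(* Words [w] over [A] of length [k] such that [beta^k x - \sum_i w_i beta^(k-1-i)]
   still lies in [[-C, C]]. *)
Fixpoint admissible_words (k : nat) (x : R) : seq (seq int) :=
  if k is k'.+1 then
    flatten [seq [seq a :: w | w <- admissible_words k' (beta * x - a%:~R)] | a <- A]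
  else if `|x| <= C then [:: [::]] else [::].

Lemma size_admissible_words k x w : w \in admissible_words k x -> size w = k.
Proof.
elim: k x w => [|k IH] x w /=; first by case: ifP => // _; rewrite inE => /eqP ->.
by move=> /flatten_mapP [a _ /mapP [w' /IH <- ->]].
Qed.

End AdmissibleWords.

Section Fibres.
Variables (R : realType) (beta : R) (A : seq int).
Hypothesis beta_gt1 : 1 < beta.

Let C := digit_bound R A / (beta - 1).
Let digits_in (y : seqZ) := forall k, y k \in A.

Lemma mkseq_admissible (k : nat) (x : R) (y : seqZ) : digits_in y ->
  phiplus beta y = x -> mkseq y k \in admissible_words beta C A k x.
Proof.
have beta_neq0 : beta != 0 by rewrite gt_eqF // (lt_trans ltr01).
elim: k x y => [|k IH] x y Ay <- /=.
  by rewrite (norm_phiplus_le beta_gt1 (fun k => digit_bound_ge R (Ay k))) inE.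
have -> : mkseq y k.+1 = y 0%N :: mkseq (fun i => y i.+1) k.
  by rewrite /mkseq /= -[1%N]addn0 iotaDl -map_comp.
apply/flatten_mapP; exists (y 0%N); first exact: Ay.
apply: map_f; apply: IH => [i|]; first exact: Ay.
by rewrite (phiplus_shift beta_gt1 (fun k => digit_bound_ge R (Ay k))); field.
Qed.

Lemma phiplus_fibre_sub (k : nat) (x : R) :
  phiplus beta @^-1` [set x] `<=`
  ~` digits_in `|` \big[setU/set0]_(w <- admissible_words beta C A k x) cylinder w.
Proof.
move=> y /= yx; have [Ay|] := pselect (digits_in y); [right | by left].
rewrite -bigcup_seq; exists (mkseq y k); last exact: cylinder_mkseq.
exact: mkseq_admissible.
Qed.

End Fibres.

Lemma finite_superlevel_set (R : realType) (T : choiceType) (f : T -> R) (e : R) :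
  0 < e -> (forall s : seq T, uniq s -> \sum_(x <- s) f x <= 1) ->
  finite_set [set x | e <= f x].
Proof.
move=> e_gt0 sum_le1; apply: contrapT => /infinite_set_fset infinite_f.
have [m _ /(_ m (leqnn m)) me] := near_infty_natSinv_lt (PosNum e_gt0).
have [B Bsub sizeB] := infinite_f m.+1; set s := finmap.enum_fset B in sizeB.
have : e * (size s)%:R <= 1.
  apply: le_trans (sum_le1 s (finmap.fset_uniq B)).
  rewrite -sum1_size natr_sum mulr_sumr !big_seq; apply: ler_sum => x xs.
  by rewrite mulr1; apply: Bsub.
apply/negP; rewrite -ltNge; apply: lt_le_trans (_ : e * m.+1%:R <= _).
  by rewrite -ltr_pdivrMr ?ltr0Sn // div1r.
by rewrite ler_pM2l // ler_nat.
Qed.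

Lemma finite_superlevel_argmax (R : realType) (T : choiceType) (f : T -> R) (x0 : T) :
  finite_set [set x | f x0 <= f x] -> exists xm, forall x, f x <= f xm.
Proof.
move=> /finite_seqP [s sE].
have in_s x : f x0 <= f x -> x \in s.
  by move=> fx; have : [set x | f x0 <= f x] x := fx; rewrite sE.
have x0s := in_s x0 (lexx _).
case: (@arg_maxP _ _ _ (SeqSub x0s) predT (f \o val)) => // xm _ xm_max.
exists (val xm) => x; have [/in_s xs|/ltW xx0] := leP (f x0) (f x).
  exact: xm_max (SeqSub xs) isT.
exact: le_trans xx0 (xm_max (SeqSub x0s) isT).
Qed.

Lemma near_div_expn_lt (R : realType) (a b e : R) :
  1 < b -> 0 < e -> \forall k \near \oo, a / b ^+ k < e.
Proof.
move=> b_gt1 e_gt0.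
have : geometric a b^-1 @ \oo --> (0 : R).
  by apply: cvg_geometric; rewrite ger0_norm ?invr_ge0 ?invf_lt1 ?ltW // (lt_trans ltr01).
move=> /cvgrPdist_lt /(_ e e_gt0); apply: filterS => k.
by rewrite sub0r normrN /geometric /= exprVn; exact: le_lt_trans (ler_norm _).
Qed.

Lemma near_pairwise_separated (R : realType) (a b : R) (s : seq R) :
  1 < b -> uniq s -> \forall k \near \oo, pairwise (fun x y : R => a / b ^+ k < `|x - y|) s.
Proof.
move=> b_gt1; elim: s => [|x s IH] /=; first by move=> _; exact: nearW.
case/andP=> xs /IH IHs.
have sep : \forall k \near \oo, forall z : seq_sub s, a / b ^+ k < `|x - val z|.
  apply: filter_forall => -[y ys]; apply: near_div_expn_lt => //=.
  by rewrite normr_gt0 subr_eq0; apply: contraNneq xs => ->.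
near=> k; rewrite (near IHs k) // andbT.
have sep_k : forall z : seq_sub s, a / b ^+ k < `|x - val z| by near: k.
by apply/allP => y ys; exact: sep_k (SeqSub ys).
Unshelve. all: by end_near.
Qed.

Lemma mxpow_ge0 (R : numDomainType) (n : nat) (M : 'M[R]_n) :
  (forall i j, 0 <= M i j) -> forall k i j, 0 <= (M ^+ k) i j.
Proof.
move=> M_ge0; elim=> [|k IH] i j; first by rewrite expr0 mxE ler0n.
by rewrite exprS mxE; apply: sumr_ge0 => l _; rewrite mulr_ge0.
Qed.

Lemma mxpow_gt0_ind (R : numDomainType) (n : nat) (M : 'M[R]_n)
    (Q : 'I_n -> 'I_n -> nat -> Prop) :
  (forall i j, 0 <= M i j) -> (forall i, Q i i 0%N) ->
  (forall i l j k, 0 < M i l -> Q l j k -> Q i j k.+1) ->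
  forall k i j, 0 < (M ^+ k) i j -> Q i j k.
Proof.
move=> M_ge0 Q0 QS; elim=> [|k IH] i j.
  by rewrite expr0 mxE; case: eqP => [<- _|_]; [exact: Q0 | rewrite ltxx].
rewrite exprS mxE => /gt_eqF /negbT /eqP sum_neq0.
have term_ge0 l : true -> 0 <= M i l * (M ^+ k) l j by rewrite mulr_ge0 ?mxpow_ge0.
have [l /andP [_]] := psumr_neq0P term_ge0 sum_neq0.
by rewrite mulr_ge0_gt0 ?mxpow_ge0 // => /andP [Mil /IH]; apply: QS.
Qed.

Section RemainderChain.
Variables (R : realType) (n : nat) (P : 'M[R]_n) (d : 'I_n -> 'I_n -> R) (beta C : R).

(* [approx_mass k x i] is the probability that the chain with transition
   matrix [P] started at [i], subtracting [d i j] from [beta] times the current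
   remainder at each step [i -> j], brings the [k]-th remainder of [x] into
   [[-C, C]]. *)
Fixpoint approx_mass (k : nat) (x : R) (i : 'I_n) : R :=
  if k is k'.+1 then \sum_j P i j * approx_mass k' (beta * x - d i j) j
  else (`|x| <= C)%R%:R.

Definition point_mass (x : R) (i : 'I_n) : R := limn (fun k => approx_mass k x i).

Hypothesis P_ge0 : forall i j, 0 <= P i j.
Hypothesis P_row1 : forall i, \sum_j P i j = 1.
Hypothesis beta_gt1 : 1 < beta.
Hypothesis window_stable : forall i j, 0 < P i j -> `|d i j| + C <= beta * C.

Let beta_gt0 : 0 < beta. Proof. exact: lt_trans ltr01 beta_gt1. Qed.

Lemma approx_mass_ge0 k x i : 0 <= approx_mass k x i.
Proof.
elim: k x i => [|k IH] x i /=; first exact: ler0n.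
by apply: sumr_ge0 => j _; rewrite mulr_ge0.
Qed.

Lemma leave_window i j x : 0 < P i j -> C < `|x| -> C < `|beta * x - d i j|.
Proof.
move=> Pij Cx; have := window_stable Pij.
have : beta * C < beta * `|x| by rewrite ltr_pM2l.
have := ler_normD (beta * x - d i j) (d i j).
rewrite subrK normrM (ger0_norm (ltW beta_gt0)); lra.
Qed.

Lemma approx_mass_nonincreasing x i : nonincreasing_seq (fun k => approx_mass k x i).
Proof.
apply/nonincreasing_seqP => k; elim: k x i => [|k IH] x i /=; last first.
  by apply: ler_sum => j _; apply: ler_wpM2l => //; exact: IH.
have [xC|Cx] := leP `|x| C.
  apply: (@le_trans _ _ (\sum_j P i j)); last by rewrite P_row1.
  by apply: ler_sum => j _; rewrite ler_piMr // lern1 leq_b1.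
rewrite big1 // => j _.
have [Pij|] := ltP 0 (P i j); first by rewrite (lt_geF (leave_window Pij Cx)) mulr0.
move=> Pij0; suff -> : P i j = 0 by rewrite mul0r.
by apply/eqP; rewrite eq_le Pij0 P_ge0.
Qed.

Lemma approx_mass_separated_sum k i (s : seq R) :
  pairwise (fun x y : R => 2 * C / beta ^+ k < `|x - y|) s ->
  \sum_(x <- s) approx_mass k x i <= 1.
Proof.
elim: k i s => [|k IH] i s /=.
  rewrite expr0 divr1; elim: s => [|x s IHs]; first by rewrite big_nil ler01.
  rewrite pairwise_cons big_cons => /andP [sep_x /IHs {}IHs].
  have [xC|_] := leP `|x| C; last by rewrite add0r.
  rewrite big1_seq ?addr0 // => y /andP [_ ys]; apply/eqP; rewrite pnatr_eq0 eqb0 -ltNge.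
  have := allP sep_x y ys; have := ler_normB x y; lra.
move=> sep_s; rewrite exchange_big /= -(P_row1 i); apply: ler_sum => j _.
rewrite -mulr_sumr ler_piMr //.
rewrite -(big_map (fun x => beta * x - d i j) xpredT (approx_mass k ^~ j)).
apply: IH; rewrite pairwise_map; apply: sub_pairwise sep_s => x y /=.
rewrite opprB addrA subrK -mulrBr normrM (ger0_norm (ltW beta_gt0)).
by rewrite exprS invfM mulrCA -(ltr_pM2l beta_gt0) mulVKf // gt_eqF.
Qed.

Lemma is_cvg_approx_mass x i : cvgn (fun k => approx_mass k x i).
Proof.
apply: nonincreasing_is_cvgn; first exact: approx_mass_nonincreasing.
by exists 0 => _ [k _ <-]; exact: approx_mass_ge0.
Qed.

Lemma point_mass_le k x i : point_mass x i <= approx_mass k x i.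
Proof.
apply: (nonincreasing_cvgn_ge (u_ := fun k => approx_mass k x i)).
  exact: approx_mass_nonincreasing.
exact: is_cvg_approx_mass.
Qed.

Lemma point_mass_ge0 x i : 0 <= point_mass x i.
Proof.
by apply: limr_ge; [exact: is_cvg_approx_mass | apply: nearW => k; exact: approx_mass_ge0].
Qed.

Lemma point_mass_out x i : C < `|x| -> point_mass x i = 0.
Proof.
move=> Cx; apply/eqP; rewrite eq_le point_mass_ge0 andbT.
by have := point_mass_le 0 x i; rewrite /= (lt_geF Cx).
Qed.

Lemma point_mass_harmonic x i :
  point_mass x i = \sum_j P i j * point_mass (beta * x - d i j) j.
Proof.
apply: (cvg_lim (@Rhausdorff R)); rewrite -cvg_shiftS /=.
apply: (cvg_big (P := xpredT) add_continuous) => // j _.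
apply: cvgM; first exact: cvg_cst.
exact: is_cvg_approx_mass.
Qed.

Lemma point_mass_sum_le1 i (s : seq R) : uniq s -> \sum_(x <- s) point_mass x i <= 1.
Proof.
move=> /(near_pairwise_separated (2 * C) beta_gt1) [K _ sepK].
apply: (@le_trans _ _ (\sum_(x <- s) approx_mass K x i)).
  by apply: ler_sum => x _; exact: point_mass_le.
exact: approx_mass_separated_sum (sepK K (leqnn K)).
Qed.

Lemma exists_point_mass_max x0 i0 : 0 < point_mass x0 i0 ->
  exists2 m : R, 0 < m & (exists i x, point_mass x i = m) /\
    forall x i, point_mass x i <= m.
Proof.
move=> pm0; pose f (ix : 'I_n * R) := point_mass ix.2 ix.1.
have : finite_set [set ix | f (i0, x0) <= f ix].
  apply: (@sub_finite_set _ _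
    ([set: 'I_n] `*`` fun i => [set x | f (i0, x0) <= point_mass x i])); first by case.
  apply: finite_setXR => [|i _]; first exact: finite_finset.
  by apply: finite_superlevel_set => // s; exact: point_mass_sum_le1.
move=> /finite_superlevel_argmax [[im xm] max_m].
exists (point_mass xm im); first exact: lt_le_trans pm0 (max_m (i0, x0)).
by split; [exists im, xm | move=> x i; exact: max_m (i, x)].
Qed.

Section Maximum.
Variable m : R.
Hypothesis point_mass_le_max : forall x i, point_mass x i <= m.

Lemma point_mass_max_step y i j :
  point_mass y i = m -> 0 < P i j -> point_mass (beta * y - d i j) j = m.
Proof.
move=> yi_max Pij.
have gap_ge0 l : 0 <= P i l * (m - point_mass (beta * y - d i l) l).
  by rewrite mulr_ge0 ?subr_ge0.
have gap0 : \sum_l P i l * (m - point_mass (beta * y - d i l) l) = 0.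
  under eq_bigr do rewrite mulrBr.
  by rewrite sumrB -mulr_suml P_row1 mul1r -point_mass_harmonic yi_max subrr.
have /(_ j isT) := psumr_eq0P (fun l _ => gap_ge0 l) gap0.
by move/eqP; rewrite mulf_eq0 (gt_eqF Pij) subr_eq0 => /eqP <-.
Qed.

Lemma point_mass_near_max k x y i : 0 < m ->
  0 < point_mass x i -> point_mass y i = m -> `|x - y| <= 2 * C / beta ^+ k.
Proof.
move=> m_gt0; elim: k x y i => [|k IH] x y i xi_gt0 yi_max.
  have inside z j : 0 < point_mass z j -> `|z| <= C.
    move=> zj_gt0; rewrite leNgt; apply/negP => /point_mass_out zj0.
    by rewrite zj0 ltxx in zj_gt0.
  have y_in : `|y| <= C by apply: (inside _ i); rewrite yi_max.
  have := inside x i xi_gt0.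
  by rewrite expr0 divr1; have := ler_normB x y; lra.
have term_ge0 j : true -> 0 <= P i j * point_mass (beta * x - d i j) j.
  by move=> _; rewrite mulr_ge0 ?point_mass_ge0.
rewrite point_mass_harmonic in xi_gt0.
have /eqP sum_neq0 := lt0r_neq0 xi_gt0.
have [j /andP [_]] := psumr_neq0P term_ge0 sum_neq0.
rewrite mulr_ge0_gt0 ?point_mass_ge0 // => /andP [Pij xj_gt0].
have := IH _ _ j xj_gt0 (point_mass_max_step yi_max Pij).
rewrite opprB addrA subrK -mulrBr normrM (ger0_norm (ltW beta_gt0)).
by rewrite exprS invfM mulrCA => h; rewrite -(ler_pM2l beta_gt0) mulVKf // gt_eqF.
Qed.

Lemma point_mass_support_max x y i : 0 < m ->
  0 < point_mass x i -> point_mass y i = m -> x = y.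
Proof.
move=> m_gt0 xi_gt0 yi_max; apply/eqP/negPn/negP => xy.
have xy_gt0 : 0 < `|x - y| by rewrite normr_gt0 subr_eq0.
have [k _ /(_ k (leqnn k))] := near_div_expn_lt (2 * C) beta_gt1 xy_gt0.
by rewrite ltNge (point_mass_near_max k m_gt0 xi_gt0 yi_max).
Qed.

Lemma point_mass_max_reach (M : 'M[R]_n) k y i j :
  (forall i j, 0 <= M i j) -> (forall i j, 0 < M i j -> 0 < P i j) ->
  point_mass y i = m -> 0 < (M ^+ k) i j -> exists z, point_mass z j = m.
Proof.
move=> M_ge0 MP yi_max /(mxpow_gt0_ind (Q := fun i j _ =>
    (exists z, point_mass z i = m) -> exists z, point_mass z j = m)); apply => //.
  by move=> i' l j' k' /MP Pil reach_l [z zi_max]; apply: reach_l;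
    exists (beta * z - d i' l); exact: point_mass_max_step.
by exists y.
Qed.

End Maximum.

End RemainderChain.

Lemma in_Qbeta_of_cycle (R : realType) (n : nat) (M : 'M[R]_n) (beta : R)
    (c : 'I_n -> R) (a : 'I_n -> 'I_n -> int) (k : nat) (i : 'I_n) :
  1 < beta -> (forall i j, 0 <= M i j) ->
  (forall i j, 0 < M i j -> beta * c i - (a i j)%:~R = c j) ->
  (0 < k)%N -> 0 < (M ^+ k) i i -> in_Qbeta beta (c i).
Proof.
move=> beta_gt1 M_ge0 edge k_gt0 cycle_i.
have [Q cycleQ] : exists Q : {poly rat}, beta ^+ k * c i = c i + (map_poly ratr Q).[beta].
  move: cycle_i; apply: (mxpow_gt0_ind (Q := fun i j k => exists Q : {poly rat},
    beta ^+ k * c i = c j + (map_poly ratr Q).[beta])) => // [i'|i' l j k' Mil [Q' HQ]].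
    by exists 0; rewrite rmorph0 horner0 addr0 expr0 mul1r.
  exists (Q' + (a i' l)%:~R%:P * 'X^k').
  rewrite rmorphD rmorphM /= map_polyC map_polyXn hornerD hornerM hornerC hornerXn /=.
  have beta_ci : beta * c i' = c l + (a i' l)%:~R by rewrite -(edge _ _ Mil); ring.
  by rewrite ratr_int exprSr -mulrA beta_ci mulrDr HQ; ring.
have beta_k1 : beta ^+ k - 1 != 0 by rewrite subr_eq0 gt_eqF // exprn_egt1 // -lt0n.
exists Q, ('X^k - 1); rewrite rmorphB /= map_polyXn rmorph1 !hornerE.
by split=> //; apply: (mulIf beta_k1); rewrite mulfVK // mulrBr mulr1 mulrC cycleQ; ring.
Qed.

Section LabelledGraph.
Variables (R : pzRingType) (n : nat) (E : {set 'I_n * 'I_n}) (lab : 'I_n * 'I_n -> int)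
  (A : seq int).
Hypotheses (A_uniq : uniq A) (lab_in_A : forall e, e \in E -> lab e \in A).

Lemma sum_Mlab_mul (F : int -> R) i j :
  \sum_(a <- A) Mlab R E lab a i j * F a = ((i, j) \in E)%:R * F (lab (i, j)).
Proof.
under eq_bigr do rewrite mxE.
have [ijE|ijE] := boolP ((i, j) \in E); last by rewrite big1 ?mul0r // => a _; rewrite mul0r.
rewrite (bigD1_seq (lab (i, j))) ?lab_in_A //= eqxx mul1r big1 ?addr0 // => a.
by rewrite eq_sym => /negbTE ->; rewrite mul0r.
Qed.

Lemma Mtot_entry i j : Mtot R E lab A i j = ((i, j) \in E)%:R.
Proof.
rewrite summxE -[RHS]mulr1 -(sum_Mlab_mul (fun=> 1)).
by apply: eq_bigr => a _; rewrite mulr1.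
Qed.

Lemma Mword_notin (a : int) (w : seq int) :
  a \notin A -> a \in w -> Mword R E lab w = 0.
Proof.
move=> aA; elim: w => // b w IH; rewrite inE /Mword big_cons => /orP [/eqP <-|aw].
  suff -> : Mlab R E lab a = 0 by rewrite mul0r.
  apply/matrixP => i j; rewrite !mxE; case ijE: ((i, j) \in E) => //=.
  by case: eqP => // labE; move: (lab_in_A ijE); rewrite labE (negbTE aA).
by rewrite -/(Mword R E lab w) IH ?mulr0.
Qed.

End LabelledGraph.

Section DoobTransform.
Variables (R : numFieldType) (n : nat) (M : 'M[R]_n) (lam : R) (v : 'cV[R]_n).
Hypotheses (lam_gt0 : 0 < lam) (v_gt0 : forall i, 0 < v i 0).

Definition doob_transform : 'M[R]_n := \matrix_(i, j) (M i j * v j 0 / (lam * v i 0)).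

Lemma doob_transform_gt0 i j : (0 < doob_transform i j) = (0 < M i j).
Proof. by rewrite mxE -mulrA pmulr_lgt0 // divr_gt0 ?mulr_gt0. Qed.

Lemma doob_transform_ge0 i j : 0 <= M i j -> 0 <= doob_transform i j.
Proof. by move=> Mij; rewrite mxE -mulrA mulr_ge0 // divr_ge0 ?mulr_ge0 ?ltW. Qed.

Lemma doob_transform_row1 i : M *m v = lam *: v -> \sum_j doob_transform i j = 1.
Proof.
move=> /matrixP /(_ i 0); rewrite !mxE => Mv_i.
under eq_bigr do rewrite mxE.
rewrite -mulr_suml Mv_i mulfV // mulf_neq0 // gt_eqF //.
Qed.

End DoobTransform.

Section Atoms.
Variables (R : realType) (n : nat) (E : {set 'I_n * 'I_n}) (lab : 'I_n * 'I_n -> int)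
  (A : seq int) (beta lam : R) (vL : 'rV[R]_n) (vR : 'cV[R]_n)
  (mu : probability seqSpace R).
Hypotheses (A_uniq : uniq A) (lab_in_A : forall e, e \in E -> lab e \in A).
Hypotheses (beta_gt1 : 1 < beta) (lam_gt0 : 0 < lam).
Hypotheses (vL_gt0 : forall i, 0 < vL 0 i) (vR_gt0 : forall i, 0 < vR i 0).
Hypothesis vR_eigen : Mtot R E lab A *m vR = lam *: vR.
Hypothesis mu_cylinder : forall s : seq int,
  mu (cylinder s) = (lam ^- size s * (vL *m Mword R E lab s *m vR) 0 0)%:E.

Let C := digit_bound R A / (beta - 1).
Let P := doob_transform (Mtot R E lab A) lam vR.
Let dlab (i j : 'I_n) : R := (lab (i, j))%:~R.

Let P_ge0 i j : 0 <= P i j.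
Proof. by apply: doob_transform_ge0 => //; rewrite Mtot_entry. Qed.

Let P_row1 i : \sum_j P i j = 1.
Proof. exact: doob_transform_row1. Qed.

Let edge_of_P_gt0 i j : 0 < P i j -> (i, j) \in E.
Proof.
by rewrite doob_transform_gt0 // Mtot_entry //; case: ((i, j) \in E); rewrite ?ltxx.
Qed.

Let window_stable i j : 0 < P i j -> `|dlab i j| + C <= beta * C.
Proof.
move=> /edge_of_P_gt0 /lab_in_A /(digit_bound_ge R) lab_le.
have -> : beta * C = digit_bound R A + C by rewrite /C; field; rewrite subr_eq0 gt_eqF.
by rewrite lerD2r.
Qed.

Lemma sum_admissible_words k x i :
  \sum_(w <- admissible_words beta C A k x) lam ^- k * (Mword R E lab w *m vR) i 0 =
  vR i 0 * approx_mass P dlab beta C k x i.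
Proof.
elim: k x i => [|k IH] x i /=.
  case: ifP => _; last by rewrite big_nil mulr0.
  by rewrite big_seq1 expr0 invr1 mul1r /Mword big_nil mul1mx mulr1.
rewrite big_flatten /= big_map.
transitivity (\sum_(a <- A) \sum_j Mlab R E lab a i j *
    (lam^-1 * (vR j 0 * approx_mass P dlab beta C k (beta * x - a%:~R) j))).
  apply: eq_bigr => a _; rewrite big_map.
  under eq_bigr => w _ do
    rewrite /Mword big_cons -/(Mword R E lab w) -mulmxE -mulmxA mxE mulr_sumr.
  rewrite exchange_big /=; apply: eq_bigr => j _.
  rewrite -IH !mulr_sumr; apply: eq_bigr => w _.
  by rewrite exprS invfM; ring.
rewrite exchange_big /= mulr_sumr; apply: eq_bigr => j _.
rewrite (sum_Mlab_mul A_uniq lab_in_A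
  (fun a => lam^-1 * (vR j 0 * approx_mass P dlab beta C k (beta * x - a%:~R) j))).
rewrite /P mxE Mtot_entry //; field.
by rewrite !gt_eqF ?mulr_gt0.
Qed.

Lemma measure_admissible_cylinders k x :
  (\sum_(w <- admissible_words beta C A k x) mu (cylinder w))%E =
  (\sum_i vL 0 i * (vR i 0 * approx_mass P dlab beta C k x i))%:E.
Proof.
rewrite (eq_big_seq (fun w => (lam ^- k * (vL *m (Mword R E lab w *m vR)) 0 0)%:E));
  last by move=> w /size_admissible_words <-; rewrite mulmxA; exact: mu_cylinder.
rewrite sumEFin; congr (_%:E).
under eq_bigr do rewrite mxE mulr_sumr.
rewrite exchange_big /=; apply: eq_bigr => i _.
rewrite -sum_admissible_words mulr_sumr; apply: eq_bigr => w _; ring.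
Qed.

Lemma negligible_digits_notin : mu.-negligible (~` [set y : seqZ | forall k, y k \in A]).
Proof.
have -> : ~` [set y : seqZ | forall k, y k \in A] = \bigcup_k [set y : seqZ | y k \notin A].
  apply/seteqP; split=> y /=; first by move=> /existsNP [k /negP]; exists k.
  by move=> [k _ /negP yk] Ay; apply: yk.
apply: negligible_bigcup => k.
have det : prefix_determined k.+1 [set y : seqZ | y k \notin A].
  by move=> y y' yy' /=; rewrite yy'.
apply/(negligibleP _ (prefix_determined_measurable det)).
apply: (prefix_determined_null det) => w sw w_sub.
have wk : nth 0 w k \notin A by apply: (w_sub (nth 0 w)).
suff -> : 0%E = (lam ^- size w * (vL *m Mword R E lab w *m vR) 0 0)%:E by exact: mu_cylinder.
by rewrite (Mword_notin _ lab_in_A wk) ?mem_nth ?sw // mulmx0 mul0mx mxE mulr0.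
Qed.

Lemma measure_fibre_le k x : (mu (phiplus beta @^-1` [set x]) <=
  (\sum_i vL 0 i * (vR i 0 * approx_mass P dlab beta C k x i))%:E)%E.
Proof.
have [N [mN N0 sub]] := negligible_digits_notin.
set U := \big[setU/set0]_(w <- admissible_words beta C A k x) cylinder w.
have mU : measurable (U : set seqSpace).
  by apply: bigsetU_measurable => w _; exact: cylinder_measurable.
have mfibre : measurable (phiplus beta @^-1` [set x] : set seqSpace).
  by rewrite -[_ @^-1` _]setTI; exact: measurable_phiplus.
have fibre_sub : phiplus beta @^-1` [set x] `<=` N `|` U.
  by move=> y /(phiplus_fibre_sub A beta_gt1 k) [/sub|]; [left | right].
have mNU : measurable (N `|` U : set seqSpace) by exact: measurableU.
apply: le_trans (le_measure mu (mem_set mfibre) (mem_set mNU) fibre_sub) _.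
have muN_le0 : (mu N <= 0)%E by rewrite measure_le0; apply/eqP; exact: N0.
apply: le_trans (measureU2 _ mN mU) (le_trans (geeDr _ muN_le0) _).
rewrite -measure_admissible_cylinders.
by apply: measure_bigsetU_le => w; exact: cylinder_measurable.
Qed.

Lemma atom_point_mass_gt0 x : (0 < mu (phiplus beta @^-1` [set x]))%E ->
  exists i, 0 < point_mass P dlab beta C x i.
Proof.
set fibre := phiplus beta @^-1` [set x] => atom_x.
pose g k := \sum_i vL 0 i * (vR i 0 * approx_mass P dlab beta C k x i).
have g_cvg : g @ \oo --> \sum_i vL 0 i * (vR i 0 * point_mass P dlab beta C x i).
  apply: (cvg_big (P := xpredT) add_continuous) => // i _.
  apply: cvgM; first exact: cvg_cst.
  by apply: cvgM; [exact: cvg_cst | exact: is_cvg_approx_mass].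
have fibre_fin : mu fibre \is a fin_num.
  by rewrite ge0_fin_numE ?measure_ge0 // (le_lt_trans (measure_fibre_le 0 x)) ?ltry.
have fibre_le_g k : fine (mu fibre) <= g k.
  by rewrite -lee_fin (fineK fibre_fin); exact: measure_fibre_le.
have : 0 < \sum_i vL 0 i * (vR i 0 * point_mass P dlab beta C x i).
  rewrite -(cvg_lim (@Rhausdorff R) g_cvg).
  apply: (@lt_le_trans _ _ (fine (mu fibre))); first by rewrite -lte_fin (fineK fibre_fin).
  by apply: limr_ge; [exact: cvgP g_cvg | apply: nearW => k; exact (fibre_le_g k)].
have term_ge0 i : true -> 0 <= vL 0 i * (vR i 0 * point_mass P dlab beta C x i).
  move=> _; rewrite mulr_ge0 ?mulr_ge0 ?(ltW (vL_gt0 i)) ?(ltW (vR_gt0 i)) //.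
  exact: point_mass_ge0 P_ge0 P_row1 beta_gt1 window_stable x i.
move=> /lt0r_neq0 /eqP /(psumr_neq0P term_ge0) [i /andP [_]].
by rewrite !pmulr_rgt0 //; exists i.
Qed.

Hypothesis M_primitive : primitive (Mtot R E lab A).

Lemma atoms_at_max_points x0 : atoms beta mu x0 ->
  exists c : 'I_n -> R, (forall x, atoms beta mu x -> exists i, x = c i) /\
    forall i j, 0 < Mtot R E lab A i j -> beta * c i - (lab (i, j))%:~R = c j.
Proof.
move=> /atom_point_mass_gt0 [i0 x0_pos].
have [m m_gt0 [[im [xm xm_max]] le_m]] :=
  exists_point_mass_max P_ge0 P_row1 beta_gt1 window_stable x0_pos.
have [M_ge0 [k0 [_ Mk0_gt0]]] := M_primitive.
have P_gt0 i j : 0 < Mtot R E lab A i j -> 0 < P i j by rewrite doob_transform_gt0.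
have reach j : exists z, point_mass P dlab beta C z j = m.
  exact (point_mass_max_reach P_ge0 P_row1 beta_gt1 window_stable le_m M_ge0 P_gt0
    xm_max (Mk0_gt0 im j)).
have [c c_max] := fin_all_exists reach.
have at_max x i : 0 < point_mass P dlab beta C x i -> x = c i.
  move=> x_pos.
  exact (point_mass_support_max P_ge0 P_row1 beta_gt1 window_stable le_m m_gt0 x_pos
    (c_max i)).
exists c; split=> [x /atom_point_mass_gt0 [i /at_max ->]|i j /P_gt0 Pij]; first by exists i.
by apply: at_max; rewrite (point_mass_max_step P_ge0 P_row1 beta_gt1 window_stable le_m
  (c_max i) Pij).
Qed.

Lemma atoms_finite_in_Qbeta :
  finite_set (atoms beta mu) /\ atoms beta mu `<=` [set x | in_Qbeta beta x].
Proof.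
have [[x0 /atoms_at_max_points [c [atom_c edge]]]|no_atom] :=
  pselect (exists x, atoms beta mu x); last first.
  have -> : atoms beta mu = set0 by apply/seteqP; split=> x // ?; apply: no_atom; exists x.
  by split; [exact: finite_set0 | exact: sub0set].
have [M_ge0 [k0 [k0_gt0 Mk0_gt0]]] := M_primitive.
split.
  apply: sub_finite_set (finite_image c (@finite_finset _ setT)).
  by move=> x /atom_c [i ->]; exists i.
by move=> x /atom_c [i ->]; exact: in_Qbeta_of_cycle beta_gt1 M_ge0 edge k0_gt0 (Mk0_gt0 i i).
Qed.

End Atoms.

Unset Implicit Arguments.
Set Strict Implicit.
Theorem lemma3 (R : realType) (n : nat) (E : {set 'I_n * 'I_n})
    (lab : 'I_n * 'I_n -> int) (A : seq int)
    (hA : uniq A) (hlab : forall e, e \in E -> lab e \in A)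
    (hprim : primitive (Mtot R E lab A))
    (beta : R) (hbeta : pisot beta)
    (lam : R) (vL : 'rV[R]_n) (vR : 'cV[R]_n)
    (hlam : 0 < lam)
    (hdom : forall (c : R[i]) (v : 'cV[R[i]]_n), v != 0 ->
       map_mx (fun r : R => (r%:C)%C) (Mtot R E lab A) *m v = c *: v ->
       c != (lam%:C)%C -> `|c| < (lam%:C)%C)
    (hvL : vL *m Mtot R E lab A = lam *: vL) (hvR : Mtot R E lab A *m vR = lam *: vR)
    (hvLpos : forall i, 0 < vL 0 i) (hvRpos : forall i, 0 < vR i 0)
    (hnorm : (vL *m vR) 0 0 = 1)
    (mu : probability seqSpace R)
    (hsupp : mu (~` Kplus E lab) = 0%E)
    (hcyl : forall s : seq int,
       mu (cylinder s) = (lam ^- size s * (vL *m Mword R E lab s *m vR) 0 0)%:E) :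
  finite_set (atoms beta mu) /\ atoms beta mu `<=` [set x | in_Qbeta beta x].
Proof.
have [beta_gt1 _] := hbeta.
exact: atoms_finite_in_Qbeta hA hlab beta_gt1 hlam hvLpos hvRpos hvR hcyl hprim.
Qed.
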